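(* Let $k\ge 1$ and $n\ge 100k$ be integers, and let $G$ be an $n$-vertex bipartite graph with minimum degree $\delta(G)>\frac{2}{5}n$. Let $u,v$ be two distinct vertices of $G$. Then: (a) if $v$ and $u$ lie in the same part of the bipartition, then for each $h\in\{3,5,\dots,2k+1\}$ there is a path from $v$ to $u$ with exactly $h$ vertices; (b) if $v$ and $u$ lie in different parts, then for each $s\in\{4,6,\dots,2k+2\}$ there is a path from $v$ to $u$ with exactly $s$ vertices.
   Context: The order of a path is its number of vertices. *)

From mathcomp Require Import all_boot.
Set Implicit Arguments. Unset Strict Implicit. Unset Printing Implicit Defensive.

Definition simple_graph (T : finType) (e : rel T) : Prop :=
  symmetric e /\ irreflexive e.

Definition deg (T : finType) (e : rel T) (x : T) : nat := #|[set y | e x y]|.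

Definition bipartition (T : finType) (e : rel T) (A : {set T}) : Prop :=
  forall x y, e x y -> (x \in A) != (y \in A).

(* p is a path from x to y: a sequence of distinct vertices, starting at x,
   ending at y, consecutive vertices adjacent. Its order is size p. *)
Definition is_path (T : finType) (e : rel T) (x y : T) (p : seq T) : Prop :=
  [/\ uniq p, head x p = x, last x p = y, p != [::] & sorted e p].

From mathcomp Require Import all_boot zify.

(** If w is a neighbour of a, then N(w) is disjoint from N(a) :|: N(b) for
    every b on the side of a, so |N(a) :&: N(b)| >= 3 delta - n > n/5 >= 20k.
    A path of order 2m+3 between two vertices a, b of the same side is grown
    from a path of order 2m+1 starting at some other vertex x of that side,
    by prepending a and a fresh common neighbour of a and x: at most 2k+2
    vertices are ever in use, so a fresh one always exists.  For endpoints on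
    different sides, step from v to a neighbour first. *)

Set Implicit Arguments. Unset Strict Implicit. Unset Printing Implicit Defensive.

Definition nbhd (T : finType) (e : rel T) (x : T) : {set T} := [set y | e x y].

Lemma in_nbhd (T : finType) (e : rel T) (x y : T) : (y \in nbhd e x) = e x y.
Proof. by rewrite inE. Qed.

Lemma exists_notin_seq (T : finType) (S : {set T}) (q : seq T) :
  size q < #|S| -> exists2 y, y \in S & y \notin q.
Proof.
move=> ltqS; apply/subsetPn; apply: contraTN ltqS => /subset_leq_card leSq.
by rewrite -leqNgt (leq_trans leSq (card_size q)).
Qed.

Lemma path_cons (T : finType) (e : rel T) (a x y : T) (p : seq T) :
  is_path e x y p -> a \notin p -> e a x -> is_path e a y (a :: p).
Proof.
case: p => [|x' p] [uniq_p /= x'x last_p _ sorted_p] // a_p ax; subst x'.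
by split; rewrite ?cons_uniq ?a_p //= ax.
Qed.

Section Bipartite.

Variables (T : finType) (e : rel T) (A : {set T}).
Hypothesis bipA : bipartition e A.

Lemma bipartition_adj x y : e x y -> (y \in A) = ~~ (x \in A).
Proof. by move/bipA; case: (x \in A); case: (y \in A). Qed.

Lemma disjoint_nbhdU_nbhd_adj a b w :
  (a \in A) = (b \in A) -> e a w -> [disjoint nbhd e a :|: nbhd e b & nbhd e w].
Proof.
move=> ab aw; rewrite disjoint_subset; apply/subsetP => y.
rewrite !inE => aby; apply/negP => /bipartition_adj.
rewrite (bipartition_adj aw) negbK.
by case/orP: aby => /bipartition_adj ->; rewrite ?ab; case: (_ \in A).
Qed.

Lemma deg_sum_le_common_nbhd a b w :
  (a \in A) = (b \in A) -> e a w ->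
  deg e a + deg e b + deg e w <= #|T| + #|nbhd e a :&: nbhd e b|.
Proof.
move=> ab aw; rewrite /deg -!/(nbhd e _).
have := cardsUI (nbhd e a) (nbhd e b).
have := cardsUI (nbhd e a :|: nbhd e b) (nbhd e w).
rewrite (disjoint_setI0 (disjoint_nbhdU_nbhd_adj ab aw)) cards0.
by have := max_card (nbhd e a :|: nbhd e b :|: nbhd e w); lia.
Qed.

Lemma card_common_nbhd_gt a b :
  (forall x, 5 * deg e x > 2 * #|T|) -> (a \in A) = (b \in A) ->
  #|T| < 5 * #|nbhd e a :&: nbhd e b|.
Proof.
move=> deg_gt ab.
have [w aw _] : exists2 w, w \in nbhd e a & w \notin [::].
  by apply: exists_notin_seq; have := deg_gt a; rewrite /deg -/(nbhd e a) /=; lia.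
have := deg_sum_le_common_nbhd ab; rewrite in_nbhd in aw => /(_ _ aw).
by have := deg_gt a; have := deg_gt b; have := deg_gt w; lia.
Qed.

End Bipartite.

Section Paths.

Variables (T : finType) (e : rel T) (A : {set T}) (B : nat).
Hypotheses (e_sym : symmetric e) (e_irr : irreflexive e).
Hypothesis bipA : bipartition e A.
Hypothesis card_common_nbhd_big :
  forall a b, (a \in A) = (b \in A) -> B < #|nbhd e a :&: nbhd e b|.

Lemma card_nbhd_gt a : B < #|nbhd e a|.
Proof. by have := card_common_nbhd_big (erefl (a \in A)); rewrite setIid. Qed.

Lemma prepend_common_nbhd (F : seq T) (a x b : T) (q : seq T) :
  (a \in A) = (x \in A) -> size q + size F < B -> a \notin F ->
  is_path e x b q -> [disjoint q & a :: F] ->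
  exists2 y, is_path e a b [:: a, y & q] & [disjoint [:: a, y & q] & F].
Proof.
move=> ax lt_qF aF qP; rewrite disjoint_sym disjoint_cons => /andP[aq Fq].
have [y] : exists2 y, y \in nbhd e a :&: nbhd e x & y \notin q ++ F.
  by apply: exists_notin_seq; have := card_common_nbhd_big ax; rewrite size_cat; lia.
rewrite in_setI !in_nbhd mem_cat negb_or => /andP[ay xy] /andP[yq yF].
have ya : y != a by apply: contraTneq ay => ->; rewrite e_irr.
exists y; last by rewrite !disjoint_cons aF yF disjoint_sym.
have yxq : is_path e y b (y :: q) by apply: (path_cons qP); rewrite // e_sym.
by apply: path_cons ay; rewrite // in_cons negb_or eq_sym ya.
Qed.

Lemma odd_path_avoiding (m : nat) (F : seq T) (a b : T) :
  size F + m.*2.+3 <= B -> a != b -> (a \in A) = (b \in A) ->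
  a \notin F -> b \notin F ->
  exists p, [/\ is_path e a b p, size p = m.*2.+3 & [disjoint p & F]].
Proof.
elim: m F a b => [|m IH] F a b le_FmB ab same_ab aF bF.
  have bP : is_path e b b [:: b] by [].
  have [||y pP pF] := prepend_common_nbhd same_ab _ aF bP.
  - by rewrite /=; lia.
  - by rewrite disjoint_cons in_cons negb_or eq_sym ab bF; apply: eq_disjoint0.
  by exists [:: a; y; b].
have le_aFmB : size (a :: F) + m.*2.+3 <= B by rewrite /=; lia.
have [y ay _] : exists2 y, y \in nbhd e a & y \notin [::].
  by apply: exists_notin_seq; apply: leq_ltn_trans (card_nbhd_gt a).
have [x yx] : exists2 x, x \in nbhd e y & x \notin [:: a, b & F].
  by apply: exists_notin_seq; have := card_nbhd_gt y; rewrite /=; lia.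
rewrite !in_nbhd in ay yx; rewrite !in_cons !negb_or => /and3P[xa xb xF].
have same_ax : (a \in A) = (x \in A).
  by rewrite (bipartition_adj bipA yx) (bipartition_adj bipA ay) negbK.
have [|||q [qP size_q qF]] := IH (a :: F) x b le_aFmB xb.
- by rewrite -same_ax.
- by rewrite in_cons negb_or xa.
- by rewrite in_cons negb_or eq_sym ab.
have [|y' pP pF] := prepend_common_nbhd same_ax _ aF qP qF.
  by rewrite size_q addnC.
by exists [:: a, y' & q]; rewrite /= size_q.
Qed.

Lemma even_path (m : nat) (a b : T) :
  m.*2.+4 <= B -> (a \in A) != (b \in A) ->
  exists p, is_path e a b p /\ size p = m.*2.+4.
Proof.
move=> le_mB diff_ab.
have [x ax xb] : exists2 x, x \in nbhd e a & x \notin [:: b].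
  apply: exists_notin_seq; apply: leq_ltn_trans (card_nbhd_gt a).
  exact: leq_trans le_mB.
rewrite in_nbhd in ax; rewrite mem_seq1 in xb.
have same_xb : (x \in A) = (b \in A).
  by rewrite (bipartition_adj bipA ax); move: diff_ab; case: (_ \in A); case: (_ \in A).
have x_a : x \notin [:: a].
  by rewrite mem_seq1; apply: contraTneq ax => ->; rewrite e_irr.
have b_a : b \notin [:: a].
  by rewrite mem_seq1; apply: contra diff_ab => /eqP ->.
have [p [pP size_p pa]] :=
  odd_path_avoiding (m := m) (F := [:: a]) le_mB xb same_xb x_a b_a.
exists (a :: p); split; last by rewrite /= size_p.
by apply: path_cons ax; move: pa; rewrite disjoint_sym disjoint_cons => /andP[].
Qed.

End Paths.

Theorem lemma3p1 (T : finType) (e : rel T) (A : {set T}) (k : nat) :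
  simple_graph e -> bipartition e A ->
  1 <= k -> 100 * k <= #|T| ->
  (forall x : T, 5 * deg e x > 2 * #|T|) ->
  forall u v : T, u != v ->
    ((v \in A) = (u \in A) ->
       forall h, odd h -> 3 <= h <= 2 * k + 1 ->
         exists p : seq T, is_path e v u p /\ size p = h) /\
    ((v \in A) != (u \in A) ->
       forall s, ~~ odd s -> 4 <= s <= 2 * k + 2 ->
         exists p : seq T, is_path e v u p /\ size p = s).
Proof.
move=> [e_sym e_irr] bipA k_gt0 le_kT deg_gt u v uv.
have common_gt a b : (a \in A) = (b \in A) ->
    2 * k + 2 < #|nbhd e a :&: nbhd e b|.
  by move/(card_common_nbhd_gt bipA deg_gt); lia.
split=> [same_vu h odd_h /andP[h_ge3 h_le] | diff_vu s even_s /andP[s_ge4 s_le]].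
  have [m def_h] : exists m, h = m.*2.+3.
    by exists (h./2 - 1); have := odd_double_half h; rewrite odd_h; lia.
  have le_hB : m.*2.+3 <= 2 * k + 2 by lia.
  have vu : v != u by rewrite eq_sym.
  have [p [pP size_p _]] := odd_path_avoiding e_sym e_irr bipA common_gt
    (F := [::]) le_hB vu same_vu isT isT.
  by exists p; rewrite def_h.
have [m def_s] : exists m, s = m.*2.+4.
  by exists (s./2 - 2); have := odd_double_half s; rewrite (negbTE even_s); lia.
have le_sB : m.*2.+4 <= 2 * k + 2 by lia.
by rewrite def_s; apply: (even_path e_sym e_irr bipA common_gt le_sB).
Qed.
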